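(* Let $p>1$ and $\lambda_0\in\mathbb{C}$. The map $Q_{\lambda_0}:L^p(F)[t]\to W^{k,p}(E)[t]$ is a right inverse of $P_{\lambda_0}:W^{k,p}(E)[t]\to L^p(F)[t]$, i.e. $P_{\lambda_0}Q_{\lambda_0}=\mathrm{Id}$ on $L^p(F)[t]$.
   Context: $X$ is a compact manifold, $E,F\to X$ Hermitian vector bundles with connections, and $P(D_t)=\sum_{l=0}^kA_{k-l}(x,\partial_x)D_t^l$ a translation-invariant elliptic operator of order $k$ on $\mathbb{R}\times X$ ($D_t=-i\partial_t$), with $P(\lambda)=\sum_lA_{k-l}\lambda^l$ and resolvent $R(\lambda)=P(\lambda)^{-1}:L^p(F)\to W^{k,p}(E)$, meromorphic in $\lambda$. Near $\lambda_0$ write $R(\lambda)=\sum_{m\ge-d(\lambda_0)}R_m(\lambda_0)(\lambda-\lambda_0)^m$, where $d(\lambda_0)$ is the pole order ($0$ if $\lambda_0$ is not a root). $W^{k,p}(E)[t]$ and $L^p(F)[t]$ denote sections over $\mathbb{R}\times X$ polynomial in $t$ with coefficients in these spaces. $P_{\lambda_0}(D_t)=e^{-i\lambda_0t}P(D_t)e^{i\lambda_0t}=\sum_{n\ge0}\frac1{n!}\frac{\partial^nP}{\partial\lambda^n}(\lambda_0)D_t^n$. $D_t^{-1}$ is the endomorphism of $L^p(F)[t]$ sending $\frac{(it)^j}{j!}v$ to $\frac{(it)^{j+1}}{(j+1)!}v$, and $D_t^{m}$ for $m<0$ means $(D_t^{-1})^{-m}$. Define $Q_{\lambda_0}=\sum_{m\ge-d(\lambda_0)}R_m(\lambda_0)D_t^m$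 (a finite sum on each polynomial). *)

From HB Require Import structures.
From mathcomp Require Import all_boot all_order all_algebra.
From mathcomp Require Import complex.
From mathcomp Require Import all_classical all_reals all_analysis.
Import numFieldNormedType.Exports.
Import Order.TTheory GRing.Theory Num.Theory.

Set Implicit Arguments.
Unset Strict Implicit.
Unset Printing Implicit Defensive.

Local Open Scope ring_scope.

(* The complex numbers are modelled as R[i] for a realType R.
   V plays the role of W^{k,p}(E), W the role of L^p(F) (abstract complex
   Banach spaces).

   Polynomial sections:  an element  sum_j (i t)^j / j! * c_j  of V[t]
   (resp. W[t]) is represented by its (finitely supported) coefficient
   function  c : nat -> V  with respect to the basis (i t)^j / j!.
   In this basis  D_t = -i d/dt  maps (it)^j/j! v to (it)^(j-1)/(j-1)! v,
   and D_t^{-1} (as defined in the paper) maps (it)^j/j! v to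
   (it)^(j+1)/(j+1)! v. *)

Definition Dt (U : zmodType) (c : nat -> U) : nat -> U := fun j => c j.+1.

Definition Dtinv (U : zmodType) (c : nat -> U) : nat -> U :=
  fun j => if j is j'.+1 then c j' else 0.

Definition Dtpow (U : zmodType) (m : int) (c : nat -> U) : nat -> U :=
  match m with
  | Posz n => iter n (@Dt U) c
  | Negz n => iter n.+1 (@Dtinv U) c
  end.

Definition Pop (R : realType) (V W : lmodType R[i]) (k : nat)
  (A : nat -> V -> W) (lam : R[i]) (v : V) : W :=
  \sum_(l < k.+1) (lam ^+ l) *: A (k - l)%N v.

(* (1/n!) d^n P / d lambda^n (lambda0)
     = sum_{l=0}^k binom(l,n) lambda0^(l-n) A_{k-l}. *)
Definition Ptaylor (R : realType) (V W : lmodType R[i]) (k : nat)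
  (A : nat -> V -> W) (lam0 : R[i]) (n : nat) (v : V) : W :=
  \sum_(l < k.+1) (('C(l, n))%:R * lam0 ^+ (l - n)) *: A (k - l)%N v.

(* P_{lambda0}(D_t) = sum_{n >= 0} (1/n!) P^{(n)}(lambda0) D_t^n acting on
   V[t] (the terms with n > k vanish since P has degree <= k). *)
Definition Plam0 (R : realType) (V W : lmodType R[i]) (k : nat)
  (A : nat -> V -> W) (lam0 : R[i]) (c : nat -> V) : nat -> W :=
  fun j => \sum_(n < k.+1) Ptaylor k A lam0 n (iter n (@Dt V) c j).

(* Q_{lambda0} = sum_{m >= -d} R_m D_t^m acting on W[t], where Rl m = R_m.
   On a polynomial whose coefficients vanish in degrees >= N, D_t^m kills
   it for m >= N, so the sum over -d <= m < N (i.e. n = m + d < d + N) is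
   the full (finite) sum. *)
Definition Qlam0 (R : realType) (V W : lmodType R[i]) (d : nat)
  (Rl : int -> W -> V) (N : nat) (c : nat -> W) : nat -> V :=
  fun j => \sum_(n < d + N) Rl (n%:Z - d%:Z) (Dtpow (n%:Z - d%:Z) c j).

(* On the punctured disc 0 < |z| < r, P(lam0 + z) = sum_n z^n P_n is a finite Taylor
   expansion and z^d R(lam0 + z) = sum_m z^m R_(m-d) is the Laurent expansion of the
   resolvent.  Since the P_n are continuous, P(lam0 + z) (z^d R(lam0 + z)) = z^d is the
   Cauchy product of the two series, and a power series in a normed space that vanishes
   on a punctured disc has zero coefficients; hence sum_(n+m=s) P_n R_(m-d) = [s == d].
   On a polynomial section, P_lam0(D_t) Q_lam0 = sum_(n,m) P_n R_(m-d) D_t^(n+m-d), and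
   regrouping by s = n + m leaves only the term D_t^0 = Id. *)

From HB Require Import structures.
From mathcomp Require Import all_boot all_order all_algebra.
From mathcomp Require Import complex.
From mathcomp Require Import all_classical all_reals all_analysis.
From mathcomp Require Import zify ring.
Import numFieldNormedType.Exports.
Import Order.TTheory GRing.Theory Num.Theory.
Local Open Scope ring_scope.
Local Open Scope classical_set_scope.

Lemma iter_Dt (U : zmodType) (c : nat -> U) n j : iter n (@Dt U) c j = c (j + n)%N.
Proof. by elim: n j => [|n IH] j /=; rewrite ?addn0 // /Dt IH addSnnS. Qed.

Lemma iter_Dtinv (U : zmodType) (c : nat -> U) n j :
  iter n (@Dtinv U) c j = if (n <= j)%N then c (j - n)%N else 0.
Proof.
elim: n j => [|n IH] j /=; first by rewrite subn0.
by case: j => [|j] //=; rewrite IH ltnS subSS.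
Qed.

Lemma Dtpow_subz (U : zmodType) (c : nat -> U) (n d j : nat) :
  Dtpow (n%:Z - d%:Z) c j = if (d <= j + n)%N then c (j + n - d)%N else 0.
Proof.
have [le_dn | lt_nd] := leqP d n.
  by rewrite subzn // /Dtpow iter_Dt ifT; [rewrite addnBA | lia].
have -> : n%:Z - d%:Z = Negz (d - n).-1.
  by rewrite NegzE prednK ?subn_gt0 // -opprB subzn // ltnW.
rewrite /Dtpow prednK ?subn_gt0 // iter_Dtinv.
have -> : (d - n <= j)%N = (d <= j + n)%N by lia.
by case: ifP => // _; congr c; lia.
Qed.

Lemma sum_diag_exchange (U : nmodType) (K M : nat) (G : nat -> nat -> U) :
  \sum_(s < M) \sum_(n < K | (n <= s)%N) G n (s - n)%N =
  \sum_(n < K) \sum_(m < M - n) G n m.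
Proof.
under eq_bigr do rewrite big_mkcond.
rewrite exchange_big /=; apply: eq_bigr => n _.
transitivity (\sum_(n <= s < M) G n (s - n)%N).
  by rewrite big_geq_mkord /= [RHS]big_mkcond.
rewrite -{1}(add0n n) big_addn big_mkord.
by apply: eq_bigr => m _; rewrite addnK.
Qed.

Section Taylor.
Context {R : realType} {V W : lmodType R[i]} (k : nat) (A : nat -> {linear V -> W}).
Variable lam0 : R[i].
Local Notation P_ n := (Ptaylor k (fun j => A j) lam0 n).

Lemma Ptaylor_is_linear n : linear (P_ n).
Proof.
move=> a x y; rewrite /Ptaylor scaler_sumr -big_split; apply: eq_bigr => l _.
by rewrite linearP scalerDr !scalerA mulrC.
Qed.

HB.instance Definition _ n :=
  GRing.isLinear.Build R[i] V W *:%R (P_ n) (Ptaylor_is_linear n).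

Lemma Pop0 lam : Pop k (fun j => A j) lam 0 = 0.
Proof. by rewrite /Pop big1 // => l _; rewrite linear0 scaler0. Qed.

Lemma Pop_taylor z x :
  Pop k (fun j => A j) (lam0 + z) x = \sum_(n < k.+1) z ^+ n *: P_ n x.
Proof.
rewrite /Pop /Ptaylor; under [RHS]eq_bigr do rewrite scaler_sumr.
rewrite exchange_big /=; apply: eq_bigr => l _.
under [RHS]eq_bigr do rewrite scalerA.
rewrite -scaler_suml exprDn.
rewrite (big_ord_widen k.+1 (fun i => lam0 ^+ (l - i) * z ^+ i *+ 'C(l, i)) (ltn_ord l)).
rewrite big_mkcond; congr (_ *: _); apply: eq_bigr => i _ /=.
case: ltnP => [_ | lt_li]; first by rewrite -mulr_natr; ring.
by rewrite bin_small // mul0r mulr0.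
Qed.

(* The coefficient of z^s in P(lam0 + z) (z^d R(lam0 + z) w). *)
Definition PR_coef (d : nat) (Rl : int -> W -> V) (s : nat) (w : W) : W :=
  \sum_(n < k.+1 | (n <= s)%N) P_ n (Rl ((s - n)%N%:Z - d%:Z) w).

Lemma Plam0_Qlam0_id (d : nat) (Rl : int -> W -> V) (N : nat) (c : nat -> W) :
  (forall j, (N <= j)%N -> c j = 0) ->
  (forall n : nat, Rl (n%:Z - d%:Z) 0 = 0) ->
  (forall s w, PR_coef d Rl s w = if s == d then w else 0) ->
  Plam0 k (fun j => A j) lam0 (Qlam0 d Rl N c) = c.
Proof.
move=> c_supp Rl0 PR_delta; apply: funext => j.
pose cd x := if (d <= x)%N then c (x - d)%N else 0.
pose G n m := P_ n (Rl (m%:Z - d%:Z) (cd (j + n + m)%N)).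
have G0 n m : (d + N <= m)%N -> G n m = 0.
  by move=> le_m; rewrite /G /cd ifT ?c_supp ?Rl0 ?linear0 //; lia.
set M := (k.+1 + (d + N))%N.
transitivity (\sum_(n < k.+1) \sum_(m < M - n) G n m).
  apply: eq_bigr => n _; rewrite iter_Dt /Qlam0 linear_sum.
  transitivity (\sum_(m < d + N) G n m).
    by apply: eq_bigr => m _; rewrite Dtpow_subz.
  rewrite (big_ord_widen _ (G n) (_ : d + N <= M - n)%N); last first.
    by have := ltn_ord n; lia.
  by rewrite big_mkcond; apply: eq_bigr => m _ /=; case: ltnP => // /G0.
rewrite -sum_diag_exchange.
transitivity (\sum_(s < M) if s == d :> nat then cd (j + s)%N else 0).
  apply: eq_bigr => s _; rewrite -PR_delta; apply: eq_bigr => n le_ns.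
  by rewrite /G; congr (P_ n (Rl _ (cd _))); lia.
rewrite -big_mkcond /= (big_ord1_eq _ (fun s => cd (j + s)%N)) ifT; last by lia.
by rewrite /cd leq_addl addnK.
Qed.

End Taylor.

Lemma geometric_sum_le {K : numFieldType} {q : K} M : 0 <= q -> q + q <= 1 ->
  \sum_(s < M) q ^+ s <= 2 - 2 * q ^+ M.
Proof.
move=> q_ge0 q2_le1; elim: M => [|M IH]; first by rewrite big_ord0 expr0 mulr1 subrr.
rewrite big_ord_recl expr0.
have -> : \sum_(i < M) q ^+ lift ord0 i = q * \sum_(i < M) q ^+ i.
  by rewrite mulr_sumr; apply: eq_bigr => i _; rewrite lift0 exprS.
apply: (@le_trans _ _ (1 + q * (2 - 2 * q ^+ M))); first by rewrite lerD2l ler_wpM2l.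
rewrite (_ : 1 + _ = 1 + (q + q) - 2 * q ^+ M.+1); last by rewrite exprS; ring.
by rewrite lerD2r -[2]/(1 + 1) lerD2l.
Qed.

Section PowerSeries.
Context {R : realType} {U : normedModType R[i]}.

Lemma cvg_series_terms_bounded (u : nat -> U) (l : U) :
  (\sum_(s < M) u s) @[M --> \oo] --> l -> exists B, forall s, `|u s| <= B.
Proof.
pose S n := \sum_(s < n) u s; move=> /(cvgP _)/(@cvg_seq_bounded _ _ S) [M [_ le_M]].
have /= {}le_M := le_M (M + 1) (ltr_pwDr ltr01 (lexx M)) _ I.
exists ((M + 1) + (M + 1)) => s.
have -> : u s = S s.+1 - S s by rewrite /S big_ord_recr /= addrAC subrr add0r.
exact: le_trans (ler_normB _ _) (lerD (le_M s.+1) (le_M s)).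
Qed.

Lemma norm_power_series_tail_le (a : nat -> U) (z q B : R[i]) N :
  0 <= q -> q + q <= 1 -> (forall s, `|z ^+ s *: a s| <= B) ->
  `|\sum_(s < N) (q * z) ^+ s.+1 *: a s.+1| <= q * B * 2.
Proof.
move=> q_ge0 q2_le1 le_B; have B_ge0 : 0 <= B := le_trans (normr_ge0 _) (le_B 0%N).
apply: (le_trans (ler_norm_sum _ _ _)).
apply: (@le_trans _ _ (\sum_(s < N) q ^+ s.+1 * B)).
  apply: ler_sum => s _; rewrite exprMn -scalerA normrZ ger0_norm ?exprn_ge0 //.
  by rewrite ler_wpM2l ?exprn_ge0.
rewrite (_ : \sum_(s < N) _ = q * B * \sum_(s < N) q ^+ s); last first.
  by rewrite mulr_sumr; apply: eq_bigr => s _; rewrite exprS; ring.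
rewrite ler_wpM2l ?mulr_ge0 //; apply: (le_trans (geometric_sum_le N q_ge0 q2_le1)).
by rewrite gerBl mulr_ge0 // exprn_ge0.
Qed.

(* For B bounding the terms at z1 = r/2, the series at q z1 differs from a 0 by at most
   2qB while its partial sums tend to 0, so |a 0| <= q (1 + 2B) for all small q > 0. *)
Lemma power_series_coef0_eq0 {a : nat -> U} {r : R[i]} : 0 < r ->
  (forall z, 0 < `|z| < r -> (\sum_(s < M) z ^+ s *: a s) @[M --> \oo] --> 0) ->
  a 0%N = 0.
Proof.
move=> r_gt0 Sa0.
set z1 := r / 2; have z1_gt0 : 0 < z1 by rewrite divr_gt0.
have z1_lt_r : z1 < r by rewrite ltr_pdivrMr // ltr_pMr // ltr1n.
have Sz1 := Sa0 z1; rewrite gtr0_norm // z1_gt0 z1_lt_r in Sz1.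
have [B le_B] := cvg_series_terms_bounded (fun s => z1 ^+ s *: a s) _ (Sz1 isT).
have B_ge0 : 0 <= B := le_trans (normr_ge0 _) (le_B 0%N).
apply/eqP; rewrite -normr_le0; apply/ler_addgt0Pr => e e_gt0; rewrite add0r.
set C := 1 + B * 2; have C_gt0 : 0 < C by rewrite ltr_pwDl // mulr_ge0.
have eeC_gt0 : 0 < e + e + C by apply: addr_gt0 => //; apply: addr_gt0.
set q := e / (e + e + C).
have q_gt0 : 0 < q by rewrite divr_gt0.
have q2_le1 : q + q <= 1.
  by rewrite /q -mulrDl ler_pdivrMr // mul1r lerDl ltW.
have qC_le : q * C <= e.
  by rewrite /q mulrAC ler_pdivrMr // ler_pM2l // lerDr addr_ge0 ?ltW.
have z_in : 0 < `|q * z1| < r.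
  rewrite normrM !gtr0_norm // mulr_gt0 //=; apply: le_lt_trans z1_lt_r.
  by apply: ler_piMl; [exact: ltW | apply: le_trans q2_le1; rewrite lerDl ltW].
have [N _ S_lt] := cvgr_dist_lt _ _ (Sa0 _ z_in) _ q_gt0.
have := S_lt N.+1 (leqnSn N); rewrite /= sub0r normrN big_ord_recl expr0 scale1r.
under eq_bigr do rewrite lift0.
set X := \sum_(i < N) _ => lt_q.
rewrite -(addrK X (a 0%N)) (le_trans (ler_normB _ _)) // (le_trans _ qC_le) // ltW //.
have le_X := norm_power_series_tail_le _ _ _ _ N (ltW q_gt0) q2_le1 le_B.
rewrite (lt_le_trans (ltr_leD lt_q le_X)) //.
by rewrite le_eqVlt /C; apply/orP; left; apply/eqP; ring.
Qed.

Lemma power_series_eq0 {a : nat -> U} {r : R[i]} : 0 < r ->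
  (forall z, 0 < `|z| < r -> (\sum_(s < M) z ^+ s *: a s) @[M --> \oo] --> 0) ->
  forall s, a s = 0.
Proof.
move=> r_gt0 Sa0; elim/ltn_ind => t IH.
apply: (@power_series_coef0_eq0 (fun s => a (s + t)%N) r r_gt0) => z z_in.
have z_neq0 : z != 0 by rewrite -normr_gt0; case/andP: z_in.
have shift M : \sum_(s < M) z ^+ s *: a (s + t)%N = z ^- t *: \sum_(s < M + t) z ^+ s *: a s.
  rewrite addnC big_split_ord /= [X in X + _]big1 => [|s _]; last by rewrite IH ?scaler0.
  rewrite add0r scaler_sumr; apply: eq_bigr => s _.
  by rewrite scalerA exprD mulrA mulVf ?mul1r 1?addnC // expf_neq0.
rewrite (eq_cvg _ _ shift).
have := Sa0 z z_in; rewrite -(cvg_shiftn t) => /(cvgZl_tmp (k := z ^- t)).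
by rewrite scaler0; apply.
Qed.

End PowerSeries.

Section ResolventLaurent.
Context {R : realType} {V W : normedModType R[i]} {k : nat} {A : nat -> {linear V -> W}}.
Hypothesis A_cont : forall j, continuous (A j).
Context {lam0 : R[i]} {Rf : R[i] -> W -> V} {d : nat} {Rl : int -> W -> V} {r : R[i]}.
Hypothesis r_gt0 : 0 < r.
Hypothesis resolvent_laurent : forall lam : R[i], 0 < `|lam - lam0| < r ->
  [/\ forall w, Pop k (fun j => A j) lam (Rf lam w) = w,
      forall v, Rf lam (Pop k (fun j => A j) lam v) = v &
      forall w, (\sum_(n < M) ((lam - lam0) ^ (n%:Z - d%:Z)) *: Rl (n%:Z - d%:Z) w)
                  @[M --> \oo] --> Rf lam w].
Local Notation P_ n := (Ptaylor k (fun j => A j) lam0 n).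

Lemma Ptaylor_continuous n : continuous (P_ n).
Proof.
apply: continuous_big; first exact: add_continuous.
by move=> l _ x; apply: cvgZl_tmp; apply: A_cont.
Qed.

Let shift_punctured_disc {z} : 0 < `|z| < r -> 0 < `|lam0 + z - lam0| < r.
Proof. by rewrite addrC addKr. Qed.

Lemma laurent_cvg w z : 0 < `|z| < r ->
  (\sum_(n < M) z ^+ n *: Rl (n%:Z - d%:Z) w) @[M --> \oo] --> z ^+ d *: Rf (lam0 + z) w.
Proof.
move=> z_in; have z_neq0 : z != 0 by rewrite -normr_gt0; case/andP: z_in.
have scaled M : \sum_(n < M) z ^+ n *: Rl (n%:Z - d%:Z) w =
    z ^+ d *: \sum_(n < M) z ^ (n%:Z - d%:Z) *: Rl (n%:Z - d%:Z) w.
  rewrite scaler_sumr; apply: eq_bigr => n _; rewrite scalerA; congr (_ *: _).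
  by rewrite -[z ^+ d]/(z ^ d%:Z) -expfzDr // addrC subrK.
have [_ _ /(_ w)] := resolvent_laurent _ (shift_punctured_disc z_in).
have -> : lam0 + z - lam0 = z by rewrite addrC addKr.
by move=> Rf_cvg; rewrite (eq_cvg _ _ scaled); apply: cvgZl_tmp.
Qed.

(* The R_m need not be linear: R_m 0 = 0 because R(lam) 0 = R(lam) (P(lam) 0) = 0. *)
Lemma Rl_zero n : Rl (n%:Z - d%:Z) 0 = 0.
Proof.
move: n; apply: (power_series_eq0 r_gt0) => z z_in.
have [_ RP _] := resolvent_laurent _ (shift_punctured_disc z_in).
have Rf0 : Rf (lam0 + z) 0 = 0 by rewrite -{1}(Pop0 k A (lam0 + z)) RP.
by have := laurent_cvg 0 z z_in; rewrite Rf0 scaler0.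
Qed.

Lemma PR_coef_partial_sum w z M :
  \sum_(s < M) z ^+ s *: PR_coef k A lam0 d Rl s w =
  \sum_(n < k.+1) z ^+ n *: P_ n (\sum_(m < M - n) z ^+ m *: Rl (m%:Z - d%:Z) w).
Proof.
pose G n m := z ^+ (n + m) *: P_ n (Rl (m%:Z - d%:Z) w).
transitivity (\sum_(s < M) \sum_(n < k.+1 | (n <= s)%N) G n (s - n)%N).
  apply: eq_bigr => s _; rewrite /PR_coef scaler_sumr.
  by apply: eq_bigr => n le_ns; rewrite /G subnKC.
rewrite sum_diag_exchange; apply: eq_bigr => n _.
rewrite [P_ n _]linear_sum scaler_sumr; apply: eq_bigr => m _.
by rewrite /G linearZ scalerA exprD.
Qed.

Lemma PR_coef_cvg w z : 0 < `|z| < r ->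
  (\sum_(s < M) z ^+ s *: PR_coef k A lam0 d Rl s w) @[M --> \oo] --> z ^+ d *: w.
Proof.
move=> z_in; have [PR _ _] := resolvent_laurent _ (shift_punctured_disc z_in).
have -> : z ^+ d *: w = \sum_(n < k.+1) z ^+ n *: P_ n (z ^+ d *: Rf (lam0 + z) w).
  rewrite -{1}(PR w) Pop_taylor scaler_sumr; apply: eq_bigr => n _.
  by rewrite [P_ n _]linearZ !scalerA mulrC.
rewrite (eq_cvg _ _ (PR_coef_partial_sum w z)).
apply: cvg_big => [|n _]; first exact: add_continuous.
have Sn_cvg : (\sum_(m < M - n) z ^+ m *: Rl (m%:Z - d%:Z) w) @[M --> \oo] -->
    z ^+ d *: Rf (lam0 + z) w.
  by rewrite -(cvg_shiftn n); under eq_cvg do rewrite /= addnK; exact: laurent_cvg.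
exact: cvgZl_tmp (cvg_comp _ _ Sn_cvg (Ptaylor_continuous n _)).
Qed.

Lemma PR_coef_delta s w : PR_coef k A lam0 d Rl s w = if s == d then w else 0.
Proof.
apply/eqP; rewrite -subr_eq0; apply/eqP; move: s.
apply: (power_series_eq0 r_gt0) => z z_in.
pose delta (s : nat) := if s == d then w else 0.
have delta_cvg : (\sum_(s < M) z ^+ s *: delta s) @[M --> \oo] --> z ^+ d *: w.
  apply: cvg_near_cst; exists d.+1 => // M /= lt_dM.
  transitivity (\sum_(s < M | s == d :> nat) z ^+ s *: w).
    by rewrite [RHS]big_mkcond; apply: eq_bigr => s _; rewrite /delta; case: eqP; rewrite ?scaler0.
  by rewrite (big_ord1_eq _ (fun s => z ^+ s *: w)) lt_dM.
have sumB M : \sum_(s < M) z ^+ s *: (PR_coef k A lam0 d Rl s w - delta s) =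
    \sum_(s < M) z ^+ s *: PR_coef k A lam0 d Rl s w - \sum_(s < M) z ^+ s *: delta s.
  by rewrite -sumrB; apply: eq_bigr => s _; rewrite scalerBr.
rewrite (eq_cvg _ _ sumB).
by have := cvgB (PR_coef_cvg w z z_in) delta_cvg; rewrite subrr; apply.
Qed.

End ResolventLaurent.

Theorem lemma3p10
  (R : realType) (V W : completeNormedModType R[i])
  (k : nat) (A : nat -> {linear V -> W})
  (hA : forall j, continuous (A j))
  (lam0 : R[i]) (Rf : R[i] -> W -> V) (d : nat) (Rl : int -> W -> V)
  (hR : exists2 r : R[i], 0 < r &
     forall lam : R[i], 0 < `|lam - lam0| < r ->
       [/\ forall w : W, Pop k (fun j => A j) lam (Rf lam w) = w,
           forall v : V, Rf lam (Pop k (fun j => A j) lam v) = v &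
           forall w : W,
             (\sum_(n < M) ((lam - lam0) ^ (n%:Z - d%:Z)) *: Rl (n%:Z - d%:Z) w)
               @[M --> \oo] --> Rf lam w])
  (N : nat) (c : nat -> W) (hc : forall j, (N <= j)%N -> c j = 0) :
  Plam0 k (fun j => A j) lam0 (Qlam0 d Rl N c) = c.
Proof.
have [r r_gt0 resolvent_laurent] := hR.
apply: Plam0_Qlam0_id => // [n | s w].
- exact: Rl_zero r_gt0 resolvent_laurent n.
- exact: (PR_coef_delta hA r_gt0 resolvent_laurent).
Qed.
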